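(* On each of the two charts of $\mathbb OP^{(1,1)}$, with coordinates $(u,v)\in\mathbb O^2$ satisfying $1+|u|^2-|v|^2>0$, the symmetric bilinear form whose quadratic form on tangent vectors $(du,dv)=(\xi,\eta)$ is $$ds^2=\frac{|\xi|^2(1-|v|^2)-|\eta|^2(1+|u|^2)+2\mathrm{Re}\big[(u\bar v)(\eta\bar\xi)\big]}{(1+|u|^2-|v|^2)^2}$$ defines a non-degenerate metric on $\mathbb OP^{(1,1)}$ of signature $(8,8)$.
   Context: Octonions $\mathbb O=\mathbb H\oplus\mathbb H$ with product $(q_1,q_2)(p_1,p_2)=(q_1p_1-\bar p_2q_2,\ p_2q_1+q_2\bar p_1)$, conjugation $\overline{(q_1,q_2)}=(\bar q_1,-q_2)$, $\langle a,b\rangle=\mathrm{Re}(a\bar b)$, $|a|^2=\langle a,a\rangle$ (positive definite). Let $U_1=\{(1,u,v)\in\mathbb O^3:1+|u|^2-|v|^2>0\}$, $U_2=\{(u,1,v)\in\mathbb O^3:|u|^2+1-|v|^2>0\}$, and on $U_1\cup U_2$ let $[a,b,c]\sim[d,e,f]$ iff $(a,b,c)=(d\lambda,e\lambda,f\lambda)$ for some $\lambda\in\mathbb O\setminus\{0\}$. The indefinite octonionic projective plane is $\mathbb OP^{(1,1)}=(U_1\cup U_2)/_\sim$, with charts $[1,u,v]\mapsto(u,v)$ and $[u,1,v]\mapsto(u,v)$. *)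

From HB Require Import structures.
From mathcomp Require Import all_boot all_order all_algebra.
From mathcomp Require Import all_classical all_reals all_analysis.
Set Implicit Arguments. Unset Strict Implicit. Unset Printing Implicit Defensive.
Import Order.TTheory GRing.Theory Num.Theory.
Local Open Scope ring_scope.

Section Octonions.
Variable R : realType.

Record quat := Quat { qr : R; qi : R; qj : R; qk : R }.

Definition qadd (a b : quat) : quat :=
  Quat (qr a + qr b) (qi a + qi b) (qj a + qj b) (qk a + qk b).
Definition qopp (a : quat) : quat := Quat (- qr a) (- qi a) (- qj a) (- qk a).
Definition qscale (c : R) (a : quat) : quat :=
  Quat (c * qr a) (c * qi a) (c * qj a) (c * qk a).
Definition qmul (a b : quat) : quat :=
  Quat (qr a * qr b - qi a * qi b - qj a * qj b - qk a * qk b)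
       (qr a * qi b + qi a * qr b + qj a * qk b - qk a * qj b)
       (qr a * qj b - qi a * qk b + qj a * qr b + qk a * qi b)
       (qr a * qk b + qi a * qj b - qj a * qi b + qk a * qr b).
Definition qconj (a : quat) : quat := Quat (qr a) (- qi a) (- qj a) (- qk a).

(** Octonions O = H (+) H (Cayley-Dickson), as in the paper:
    (q1,q2)(p1,p2) = (q1 p1 - conj(p2) q2, p2 q1 + q2 conj(p1)),
    conj(q1,q2) = (conj q1, - q2). *)
Record oct := Oct { ofst : quat; osnd : quat }.

Definition oadd (x y : oct) : oct := Oct (qadd (ofst x) (ofst y)) (qadd (osnd x) (osnd y)).
Definition oscale (c : R) (x : oct) : oct := Oct (qscale c (ofst x)) (qscale c (osnd x)).
Definition omul (x y : oct) : oct :=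
  Oct (qadd (qmul (ofst x) (ofst y)) (qopp (qmul (qconj (osnd y)) (osnd x))))
      (qadd (qmul (osnd y) (ofst x)) (qmul (osnd x) (qconj (ofst y)))).
Definition oconj (x : oct) : oct := Oct (qconj (ofst x)) (qopp (osnd x)).
Definition ozero : oct := Oct (Quat 0 0 0 0) (Quat 0 0 0 0).
Definition oone : oct := Oct (Quat 1 0 0 0) (Quat 0 0 0 0).

Definition ore (x : oct) : R := qr (ofst x).
Definition oinner (a b : oct) : R := ore (omul a (oconj b)).
Definition onorm2 (a : oct) : R := oinner a a.

Definition ocoord (x : oct) (k : 'I_8) : R :=
  nth 0 [:: qr (ofst x); qi (ofst x); qj (ofst x); qk (ofst x);
            qr (osnd x); qi (osnd x); qj (osnd x); qk (osnd x)] k.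
Definition oct_of_fun (f : nat -> R) : oct :=
  Oct (Quat (f 0%N) (f 1%N) (f 2%N) (f 3%N)) (Quat (f 4%N) (f 5%N) (f 6%N) (f 7%N)).

(** Chart coordinates (u,v) in O^2 and tangent vectors (xi,eta) in O^2. *)
Definition tadd (x y : oct * oct) : oct * oct := (oadd x.1 y.1, oadd x.2 y.2).
Definition tscale (c : R) (x : oct * oct) : oct * oct := (oscale c x.1, oscale c x.2).
Definition tzero : oct * oct := (ozero, ozero).
Definition tan_of_row (w : 'rV[R]_16) : oct * oct :=
  (oct_of_fun (fun k => w 0 (inord k)), oct_of_fun (fun k => w 0 (inord (8 + k)))).

(** Domain of a chart: 1 + |u|^2 - |v|^2 > 0 (the same condition,
    |u|^2 + 1 - |v|^2 > 0, for the second chart). *)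
Definition chart_dom (p : oct * oct) : Prop := 0 < 1 + onorm2 p.1 - onorm2 p.2.

Definition ds2 (p : oct * oct) (t : oct * oct) : R :=
  let u := p.1 in let v := p.2 in let xi := t.1 in let eta := t.2 in
  (onorm2 xi * (1 - onorm2 v) - onorm2 eta * (1 + onorm2 u)
     + 2 * ore (omul (omul u (oconj v)) (omul eta (oconj xi))))
  / (1 + onorm2 u - onorm2 v) ^+ 2.

Definition dsB (p : oct * oct) (x y : oct * oct) : R :=
  (ds2 p (tadd x y) - ds2 p x - ds2 p y) / 2.

Definition gram (p : oct * oct) : 'M[R]_16 :=
  \matrix_(i, j) dsB p (tan_of_row (row i 1%:M)) (tan_of_row (row j 1%:M)).

(** Points of the two charts: [1,u,v] and [u,1,v] in O^3, and the relation
    [a,b,c] ~ [d,e,f] iff (a,b,c) = (d l, e l, f l) for some l <> 0. *)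
Definition oequiv (a b c d e f : oct) : Prop :=
  exists l : oct, l <> ozero /\ a = omul d l /\ b = omul e l /\ c = omul f l.

Definition curve_deriv0 (gamma : R -> oct * oct) (dg : oct * oct) : Prop :=
  forall k : 'I_8,
    is_derive (0 : R) (1 : R) (fun t => ocoord (gamma t).1 k) (ocoord dg.1 k) /\
    is_derive (0 : R) (1 : R) (fun t => ocoord (gamma t).2 k) (ocoord dg.2 k).

End Octonions.

(** Sylvester: a (symmetric) matrix G of size p+q has signature (p,q) iff
    it is congruent to diag(1,...,1,-1,...,-1) (p plus signs, q minus signs). *)
Definition has_signature (R : realType) (p q : nat) (G : 'M[R]_(p + q)) : Prop :=
  exists P : 'M[R]_(p + q),
    P \in unitmx /\ P^T *m G *m P = block_mx 1%:M 0 0 (- 1%:M).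
Arguments has_signature {R} p q G.

(* Write al = 1 - |v|^2, be = 1 + |u|^2, a = u conj(v) and D = 1 + |u|^2 - |v|^2.
   The numerator of ds^2 is the quadratic form of N(x, y) = <M x, y>, where
   M (xi, eta) = (al xi + a eta, conj(a) xi - be eta), and the denominator is D^2,
   with D = al be + |a|^2 > 0.  Since be (M x).1 + a (M x).2 = D xi, M is
   injective, and N(x, M x) = |M x|^2 gives non-degeneracy.  The vectors
   (s e_k, (s / be) conj(a) e_k), s = sqrt(be D), and (0, (D / sqrt be) e_k) form
   an N-orthogonal frame on which N takes the values D^2 and -D^2: signature (8,8).
   On the overlap of the charts [1,u,v] = [u',1,v'] means u' = conj(u) / |u|^2 and
   v' = v conj(u) / |u|^2; differentiating along a curve and using the alternative
   laws (x y) conj(y) = |y|^2 x and conj(x) (x y) = |x|^2 y turns the ds^2 of the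
   second chart into that of the first. *)

From HB Require Import structures.
From mathcomp Require Import all_boot all_order all_algebra.
From mathcomp Require Import all_classical all_reals all_analysis.
From mathcomp Require Import ring.
Import Order.TTheory GRing.Theory Num.Theory.
Import numFieldNormedType.Exports.
Local Open Scope ring_scope.

Ltac oct_unfold :=
  cbv beta iota delta [onorm2 oinner ore omul oconj oadd oscale qadd qmul qopp
                       qconj qscale qr qi qj qk ofst osnd oone ozero].
Ltac oct_case x := case: x => [[? ? ? ?] [? ? ? ?]].
Ltac oct_eq := oct_unfold; congr (Oct (Quat _ _ _ _) (Quat _ _ _ _)); ring.

Section OctonionAlgebra.
Context {R : realType}.
Local Notation oct := (oct R).
Implicit Types (u v w x y z : oct) (c : R).

Lemma onorm2E (a b c d e f g h : R) :
  onorm2 (Oct (Quat a b c d) (Quat e f g h)) =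
  a ^+ 2 + b ^+ 2 + c ^+ 2 + d ^+ 2 + e ^+ 2 + f ^+ 2 + g ^+ 2 + h ^+ 2.
Proof. oct_unfold; ring. Qed.

Lemma onorm2_ge0 x : 0 <= onorm2 x.
Proof. by oct_case x; rewrite onorm2E; do ! apply: addr_ge0; exact: sqr_ge0. Qed.

Lemma onorm2_eq0 x : onorm2 x = 0 -> x = ozero R.
Proof.
oct_case x; rewrite onorm2E => /eqP.
rewrite !paddr_eq0 ?(addr_ge0, sqr_ge0) // !sqrf_eq0.
by do 7 case/andP => + /eqP ->; move/eqP ->.
Qed.

Lemma onorm2_mul u v : onorm2 (omul u v) = onorm2 u * onorm2 v.
Proof. by oct_case u; oct_case v; oct_unfold; ring. Qed.

Lemma onorm2_conj x : onorm2 (oconj x) = onorm2 x.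
Proof. by oct_case x; oct_unfold; ring. Qed.

Lemma onorm2_scale c x : onorm2 (oscale c x) = c ^+ 2 * onorm2 x.
Proof. by oct_case x; oct_unfold; ring. Qed.

Lemma onorm2D x y : onorm2 (oadd x y) = onorm2 x + onorm2 y + 2 * oinner x y.
Proof. by oct_case x; oct_case y; oct_unfold; ring. Qed.

Lemma oinnerC x y : oinner x y = oinner y x.
Proof. by oct_case x; oct_case y; oct_unfold; ring. Qed.

Lemma oinner_conj x y : oinner (oconj x) (oconj y) = oinner x y.
Proof. by oct_case x; oct_case y; oct_unfold; ring. Qed.

Lemma oinner_scaler c x y : oinner x (oscale c y) = c * oinner x y.
Proof. by oct_case x; oct_case y; oct_unfold; ring. Qed.

Lemma ore_scale c x : ore (oscale c x) = c * ore x.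
Proof. by oct_case x; oct_unfold; ring. Qed.

Lemma oconjK x : oconj (oconj x) = x.
Proof. by oct_case x; oct_eq. Qed.

Lemma oconj_scale c x : oconj (oscale c x) = oscale c (oconj x).
Proof. by oct_case x; oct_eq. Qed.

Lemma oconj_mul x y : oconj (omul x y) = omul (oconj y) (oconj x).
Proof. by oct_case x; oct_case y; oct_eq. Qed.

Lemma omul_scalel c x y : omul (oscale c x) y = oscale c (omul x y).
Proof. by oct_case x; oct_case y; oct_eq. Qed.

Lemma omul_scaler c x y : omul x (oscale c y) = oscale c (omul x y).
Proof. by oct_case x; oct_case y; oct_eq. Qed.

Lemma omul1o x : omul (oone R) x = x.
Proof. by oct_case x; oct_eq. Qed.

Lemma omulK_conj x y : omul (omul x y) (oconj y) = oscale (onorm2 y) x.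
Proof. by oct_case x; oct_case y; oct_eq. Qed.

Lemma oconj_mulK x y : omul (oconj x) (omul x y) = oscale (onorm2 x) y.
Proof. by oct_case x; oct_case y; oct_eq. Qed.

Lemma oscale0 c : oscale c (ozero R) = ozero R.
Proof. by rewrite /oscale /qscale /= mulr0. Qed.

Lemma oscaleK c x : c != 0 -> oscale c^-1 (oscale c x) = x.
Proof.
move=> c0; oct_case x; oct_unfold.
by congr (Oct (Quat _ _ _ _) (Quat _ _ _ _)); rewrite mulrA mulVf ?mul1r.
Qed.

Lemma oscale_eq0 c x : c != 0 -> oscale c x = ozero R -> x = ozero R.
Proof. by move=> c0 cx0; rewrite -(oscaleK c x c0) cx0 oscale0. Qed.

End OctonionAlgebra.

Section NumeratorForm.
Context {R : realType}.
Local Notation oct := (oct R).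
Variables (al be : R) (a : oct).
Implicit Types (x y z : oct * oct).

Definition ds_num x y : R :=
  al * oinner x.1 y.1 - be * oinner x.2 y.2
  + ore (omul a (omul x.2 (oconj y.1))) + ore (omul a (omul y.2 (oconj x.1))).

Lemma ds_numC x y : ds_num x y = ds_num y x.
Proof.
case: x y => [x1 x2] [y1 y2]; rewrite /ds_num /=.
by oct_case x1; oct_case x2; oct_case y1; oct_case y2; oct_case a; oct_unfold; ring.
Qed.

Lemma ds_num_linear c x y z :
  ds_num (tadd (tscale c x) y) z = c * ds_num x z + ds_num y z.
Proof.
case: x y z => [x1 x2] [y1 y2] [z1 z2]; rewrite /ds_num /tadd /tscale /=.
oct_case x1; oct_case x2; oct_case y1; oct_case y2; oct_case z1; oct_case z2.
by oct_case a; oct_unfold; ring.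
Qed.

Lemma ds_num_polar x y :
  ds_num (tadd x y) (tadd x y) - ds_num x x - ds_num y y = 2 * ds_num x y.
Proof.
case: x y => [x1 x2] [y1 y2]; rewrite /ds_num /tadd /=.
by oct_case x1; oct_case x2; oct_case y1; oct_case y2; oct_case a; oct_unfold; ring.
Qed.

Definition ds_op x : oct * oct :=
  (oadd (oscale al x.1) (omul a x.2), oadd (omul (oconj a) x.1) (oscale (- be) x.2)).

Lemma ds_numE x y : ds_num x y = oinner (ds_op x).1 y.1 + oinner (ds_op x).2 y.2.
Proof.
case: x y => [x1 x2] [y1 y2]; rewrite /ds_num /ds_op /=.
by oct_case x1; oct_case x2; oct_case y1; oct_case y2; oct_case a; oct_unfold; ring.
Qed.

Lemma ds_op_eq0 x : al * be + onorm2 a != 0 -> be != 0 ->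
  ds_op x = tzero R -> x = tzero R.
Proof.
move=> D0 be0 opx0.
have w1 : (ds_op x).1 = ozero R by rewrite opx0.
have w2 : (ds_op x).2 = ozero R by rewrite opx0.
case: x w1 w2 {opx0} => x1 x2 /= w1 w2.
have x1_0 : x1 = ozero R.
  apply: (oscale_eq0 _ _ D0).
  have -> : oscale (al * be + onorm2 a) x1 =
      oadd (oscale be (oadd (oscale al x1) (omul a x2)))
           (omul a (oadd (omul (oconj a) x1) (oscale (- be) x2))).
    by clear w1 w2; oct_case x1; oct_case x2; oct_case a; oct_eq.
  by rewrite w1 w2; clear w1 w2; oct_case a; oct_eq.
congr (_, _) => //; apply: (oscale_eq0 _ _ (_ : - be != 0)); first by rewrite oppr_eq0.
by rewrite -w2 x1_0; clear w1 w2 x1_0; oct_case x2; oct_case a; oct_eq.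
Qed.

Lemma ds_num_nondegenerate x : al * be + onorm2 a != 0 -> be != 0 ->
  (forall y, ds_num x y = 0) -> x = tzero R.
Proof.
move=> D0 be0 /(_ (ds_op x)); rewrite ds_numE -!/(onorm2 _) => /eqP.
rewrite paddr_eq0 ?onorm2_ge0 // => /andP[/eqP/onorm2_eq0 w1 /eqP/onorm2_eq0 w2].
by apply: ds_op_eq0 => //; rewrite [ds_op x]surjective_pairing w1 w2.
Qed.

End NumeratorForm.

Section GramMatrix.
Context {R : comPzRingType} {n : nat} {b : 'rV[R]_n -> 'rV[R]_n -> R}.
Hypothesis b_linear : forall c u v w, b (c *: u + v) w = c * b u w + b v w.
Hypothesis b_sym : forall u v, b u v = b v u.

Lemma bilinear_row_expand u w : b u w = \sum_k u 0 k * b (row k 1%:M) w.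
Proof.
have b0 w' : b 0 w' = 0.
  have := b_linear 1 0 0 w'; rewrite scaler0 addr0 mul1r.
  by move=> /(congr1 (fun x => x - b 0 w')); rewrite subrr addrK.
rewrite {1}[u]row_sum_delta; elim/big_rec2: _ => [|k x y _ <-]; first exact: b0.
by rewrite b_linear row1.
Qed.

Lemma gram_congr (Q : 'M[R]_n) :
  Q *m (\matrix_(k, l) b (row k 1%:M) (row l 1%:M)) *m Q^T =
  \matrix_(i, j) b (row i Q) (row j Q).
Proof.
apply/matrixP => i j; rewrite [RHS]mxE bilinear_row_expand.
under [RHS]eq_bigr => k _ do rewrite b_sym bilinear_row_expand big_distrr.
rewrite [RHS]exchange_big mxE; apply: eq_bigr => l _.
rewrite !mxE big_distrl; apply: eq_bigr => k _.
by rewrite !mxE [b (row l _) _]b_sym /= mulrAC -mulrA.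
Qed.

End GramMatrix.

Lemma has_signature_congr (R : realType) (p q : nat) (G Q : 'M[R]_(p + q)) :
  Q *m G *m Q^T = block_mx 1%:M 0 0 (- 1%:M) -> has_signature p q G.
Proof.
move=> QGQ; exists Q^T; rewrite trmxK; split=> //.
rewrite unitmxE det_tr unitfE; apply/eqP => detQ0.
move: (congr1 determinant QGQ); rewrite !det_mulmx det_tr detQ0 mul0r.
rewrite det_ublock det1 mul1r -scaleN1r detZ det1 mulr1 mulr0 => /esym/eqP.
by rewrite expf_eq0 oppr_eq0 oner_eq0 andbF.
Qed.

Section SignatureFrame.
Context {R : realType}.
Local Notation oct := (oct R).
Variables (al be : R) (a : oct).
Hypotheses (be_gt0 : 0 < be) (det_gt0 : 0 < al * be + onorm2 a).
Local Notation D := (al * be + onorm2 a).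

Definition obasis (k : 'I_8) : oct := oct_of_fun (fun m => (m == k)%:R).

Lemma oinner_obasis i j : oinner (obasis i) (obasis j) = (i == j)%:R.
Proof.
by case: i j => [[|[|[|[|[|[|[|[|i]]]]]]]] Hi] // [[|[|[|[|[|[|[|[|j]]]]]]]] Hj] //;
  oct_unfold => /=; ring.
Qed.

(* The first eight vectors are [ds_num]-orthogonal to the last eight because
   the second component of the former is [be^-1 (conj a)] times the first. *)
Definition ds_frame (i : 'I_(8 + 8)) : oct * oct :=
  let s := Num.sqrt (be * D) in
  match fintype.split i with
  | inl k => (oscale s (obasis k), oscale (s / be) (omul (oconj a) (obasis k)))
  | inr k => (ozero R, oscale (D / Num.sqrt be) (obasis k))
  end.

Lemma ds_num_frame i j :
  ds_num al be a (ds_frame i) (ds_frame j) =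
  D ^+ 2 * (block_mx 1%:M 0 0 (- 1%:M) : 'M[R]_(8 + 8)) i j.
Proof.
have sqrt_beD : Num.sqrt (be * D) ^+ 2 = be * D by rewrite sqr_sqrtr // mulr_ge0 // ltW.
have sqrt_be : Num.sqrt be ^+ 2 = be by rewrite sqr_sqrtr // ltW.
have be0 : be != 0 by rewrite gt_eqF.
have sqrt_be0 : Num.sqrt be != 0 by rewrite gt_eqF ?sqrtr_gt0.
rewrite -[i]splitK -[j]splitK /ds_frame !unsplitK.
case: (fintype.split i) => k; case: (fintype.split j) => l /=.
- rewrite block_mxEul !mxE.
  transitivity (Num.sqrt (be * D) ^+ 2 * (al + onorm2 a / be) * oinner (obasis k) (obasis l)).
    rewrite /ds_num /=; move: (Num.sqrt _) => s; clear sqrt_beD.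
    by move: (obasis k) (obasis l) => x y; oct_case a; oct_case x; oct_case y; oct_unfold; field.
  by rewrite sqrt_beD oinner_obasis; field.
- rewrite block_mxEur mxE mulr0 /ds_num /=; move: (Num.sqrt _) (D / _) => s t.
  by move: (obasis k) (obasis l) => x y; oct_case a; oct_case x; oct_case y; oct_unfold; field.
- rewrite block_mxEdl mxE mulr0 /ds_num /=; move: (Num.sqrt _) (D / _) => s t.
  by move: (obasis k) (obasis l) => x y; oct_case a; oct_case x; oct_case y; oct_unfold; field.
- rewrite block_mxEdr !mxE.
  transitivity (- be * (D / Num.sqrt be) ^+ 2 * oinner (obasis k) (obasis l)).
    rewrite /ds_num /=; move: (D / _) => t.
    by move: (obasis k) (obasis l) => x y; oct_case a; oct_case x; oct_case y; oct_unfold; ring.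
  by rewrite oinner_obasis expr_div_n sqrt_be; case: (k == l) => /=; field.
Qed.

End SignatureFrame.

Section ChartMetric.
Context {R : realType}.
Local Notation oct := (oct R).
Implicit Types (p x y t : oct * oct).

Definition ds_denom p : R := 1 + onorm2 p.1 - onorm2 p.2.
Definition ds_numer p : oct * oct -> oct * oct -> R :=
  ds_num (1 - onorm2 p.2) (1 + onorm2 p.1) (omul p.1 (oconj p.2)).

Lemma ds_denomE p :
  (1 - onorm2 p.2) * (1 + onorm2 p.1) + onorm2 (omul p.1 (oconj p.2)) = ds_denom p.
Proof. by rewrite /ds_denom onorm2_mul onorm2_conj; ring. Qed.

Lemma ds_denom_neq0 p : chart_dom p -> ds_denom p != 0.
Proof. exact: lt0r_neq0. Qed.

Lemma ds2E p t : ds2 p t = ds_numer p t t / ds_denom p ^+ 2.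
Proof.
rewrite /ds2 /ds_numer /ds_num /ds_denom; congr (_ / _).
move: (omul p.1 _) (onorm2 p.1) (onorm2 p.2) => a nu nv.
by case: t => xi eta /=; oct_case xi; oct_case eta; oct_case a; oct_unfold; ring.
Qed.

Lemma dsBE p x y : dsB p x y = ds_numer p x y / ds_denom p ^+ 2.
Proof. by rewrite /dsB !ds2E -!mulrBl ds_num_polar mulrAC [2 * _]mulrC mulfK ?pnatr_eq0. Qed.

Lemma dsB_nondegenerate p x : chart_dom p -> (forall y, dsB p x y = 0) -> x = tzero R.
Proof.
move=> dom_p x0; have D0 := ds_denom_neq0 _ dom_p.
have : forall y, ds_numer p x y = 0.
  move=> y; have /eqP := x0 y; rewrite dsBE mulf_eq0 invr_eq0 expf_eq0 (negbTE D0).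
  by rewrite andbF orbF => /eqP.
apply: ds_num_nondegenerate; first by rewrite ds_denomE.
by rewrite gt_eqF // ltr_pwDl // onorm2_ge0.
Qed.

Definition row_of_tan x : 'rV[R]_16 :=
  \row_k if (k < 8)%N then ocoord x.1 (inord k) else ocoord x.2 (inord (k - 8)).

Lemma row_of_tanK x : tan_of_row (row_of_tan x) = x.
Proof.
case: x => [[[? ? ? ?] [? ? ? ?]] [[? ? ? ?] [? ? ? ?]]].
by rewrite /tan_of_row /oct_of_fun !mxE !inordK //= /ocoord !inordK.
Qed.

Lemma tan_of_row_linear c (w w' : 'rV[R]_16) :
  tan_of_row (c *: w + w') = tadd (tscale c (tan_of_row w)) (tan_of_row w').
Proof. by rewrite /tan_of_row /tadd /tscale /oct_of_fun /oadd /oscale /qadd /qscale /= !mxE. Qed.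

Lemma gram_signature p : chart_dom p -> has_signature 8 8 (gram p).
Proof.
move=> dom_p; set al := 1 - onorm2 p.2; set be := 1 + onorm2 p.1.
set a := omul p.1 (oconj p.2).
have be_gt0 : 0 < be by rewrite ltr_pwDl // onorm2_ge0.
have det_gt0 : 0 < al * be + onorm2 a by rewrite ds_denomE.
pose b (w w' : 'rV[R]_16) := dsB p (tan_of_row w) (tan_of_row w').
have b_linear c u v w : b (c *: u + v) w = c * b u w + b v w.
  by rewrite /b tan_of_row_linear !dsBE /ds_numer ds_num_linear mulrDl mulrA.
have b_sym u v : b u v = b v u by rewrite /b !dsBE /ds_numer ds_numC.
apply: (@has_signature_congr _ _ _ _ (\matrix_i row_of_tan (ds_frame al be a i))).
rewrite (gram_congr b_linear b_sym); apply/matrixP => i j.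
rewrite mxE !rowK /b !row_of_tanK dsBE /ds_numer -/al -/be -/a ds_num_frame //.
by rewrite ds_denomE mulrAC divff ?mul1r // expf_neq0 ?(ds_denom_neq0 _ dom_p).
Qed.

End ChartMetric.

Section CurveDerivative.
Context {R : realType}.
Local Notation oct := (oct R).

Definition deriv0 (f : R -> R) (a : R) := is_derive (0 : R) (1 : R) f a.

Lemma deriv0D {f g a b} : deriv0 f a -> deriv0 g b -> deriv0 (fun t => f t + g t) (a + b).
Proof. exact: is_deriveD. Qed.

Lemma deriv0N {f a} : deriv0 f a -> deriv0 (fun t => - f t) (- a).
Proof. exact: is_deriveN. Qed.

Lemma deriv0M {f g a b} :
  deriv0 f a -> deriv0 g b -> deriv0 (fun t => f t * g t) (f 0 * b + g 0 * a).
Proof. exact: is_deriveM. Qed.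

Lemma deriv0_cst (c : R) : deriv0 (fun _ => c) 0.
Proof. exact: is_derive_cst. Qed.

Lemma deriv0V {f a} : f 0 != 0 -> deriv0 f a -> deriv0 (fun t => (f t)^-1) (- a / f 0 ^+ 2).
Proof.
move=> f0 fa; apply: is_derive_eq (is_deriveV f0 fa) _.
by rewrite scaleNr /GRing.scale /= mulrC mulNr.
Qed.

Lemma deriv0_near {f g a} : (\forall t \near 0, f t = g t) -> deriv0 f a -> deriv0 g a.
Proof. exact: near_eq_is_derive. Qed.

Lemma deriv0_uniq {f a b} : deriv0 f a -> deriv0 f b -> a = b.
Proof. by move=> [_ <-] [_ <-]. Qed.

Definition oderiv0 (f : R -> oct) (d : oct) :=
  forall k : 'I_8, deriv0 (fun t => ocoord (f t) k) (ocoord d k).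

Lemma curve_deriv0E (g : R -> oct * oct) d :
  curve_deriv0 g d <-> oderiv0 (fun t => (g t).1) d.1 /\ oderiv0 (fun t => (g t).2) d.2.
Proof.
split=> [gd | [g1 g2] k]; last by split; [exact: g1 | exact: g2].
by split=> k; [exact: (gd k).1 | exact: (gd k).2].
Qed.

Lemma oderiv0E f d : oderiv0 f d <->
  deriv0 (fun t => qr (ofst (f t))) (qr (ofst d)) /\
  deriv0 (fun t => qi (ofst (f t))) (qi (ofst d)) /\
  deriv0 (fun t => qj (ofst (f t))) (qj (ofst d)) /\
  deriv0 (fun t => qk (ofst (f t))) (qk (ofst d)) /\
  deriv0 (fun t => qr (osnd (f t))) (qr (osnd d)) /\
  deriv0 (fun t => qi (osnd (f t))) (qi (osnd d)) /\
  deriv0 (fun t => qj (osnd (f t))) (qj (osnd d)) /\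
  deriv0 (fun t => qk (osnd (f t))) (qk (osnd d)).
Proof.
split=> [fd | [? [? [? [? [? [? [? ?]]]]]]]]; last by case=> [[|[|[|[|[|[|[|[|k]]]]]]]] Hk].
exact: (conj (fd (@Ordinal 8 0 isT)) (conj (fd (@Ordinal 8 1 isT))
       (conj (fd (@Ordinal 8 2 isT)) (conj (fd (@Ordinal 8 3 isT))
       (conj (fd (@Ordinal 8 4 isT)) (conj (fd (@Ordinal 8 5 isT))
       (conj (fd (@Ordinal 8 6 isT)) (fd (@Ordinal 8 7 isT))))))))).
Qed.

Lemma oct_of_ocoord (x : oct) : oct_of_fun (fun m => ocoord x (inord m)) = x.
Proof. by oct_case x; rewrite /oct_of_fun /ocoord !inordK. Qed.

Lemma oderiv0_uniq {f a b} : oderiv0 f a -> oderiv0 f b -> a = b.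
Proof.
move=> fa fb; rewrite -[a]oct_of_ocoord -[b]oct_of_ocoord; congr oct_of_fun.
by apply/funext => m; apply: deriv0_uniq (fa _) (fb _).
Qed.

Lemma oderiv0_near {f g d} : (\forall t \near 0, f t = g t) -> oderiv0 f d -> oderiv0 g d.
Proof. by move=> fg fd k; apply: deriv0_near (fd k); apply: filterS fg => t ->. Qed.

Ltac deriv0_step :=
  first [ eassumption | apply: deriv0D | apply: deriv0N | apply: deriv0M | apply: deriv0_cst ].
(* Each coordinate of a product of octonions is a polynomial in the coordinates
   of the factors; differentiate it by the sum and product rules. *)
Ltac deriv0_poly :=
  eapply is_derive_eq; [repeat deriv0_step | cbv beta iota delta [qr qi qj qk ofst osnd]; ring].

Lemma oderiv0_mul {f g df dg} : oderiv0 f df -> oderiv0 g dg ->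
  oderiv0 (fun t => omul (f t) (g t)) (oadd (omul df (g 0)) (omul (f 0) dg)).
Proof.
move=> /oderiv0E[? [? [? [? [? [? [? ?]]]]]]] /oderiv0E[? [? [? [? [? [? [? ?]]]]]]].
by apply/oderiv0E; oct_unfold; do 7 (split; first by deriv0_poly); deriv0_poly.
Qed.

Lemma oderiv0_conj {f df} : oderiv0 f df -> oderiv0 (fun t => oconj (f t)) (oconj df).
Proof.
move=> /oderiv0E[? [? [? [? [? [? [? ?]]]]]]].
by apply/oderiv0E; oct_unfold; do 7 (split; first by deriv0_poly); deriv0_poly.
Qed.

Lemma oderiv0_scale {s ds f df} : deriv0 s ds -> oderiv0 f df ->
  oderiv0 (fun t => oscale (s t) (f t)) (oadd (oscale ds (f 0)) (oscale (s 0) df)).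
Proof.
move=> ? /oderiv0E[? [? [? [? [? [? [? ?]]]]]]].
by apply/oderiv0E; oct_unfold; do 7 (split; first by deriv0_poly); deriv0_poly.
Qed.

Lemma deriv0_onorm2 {f df} : oderiv0 f df ->
  deriv0 (fun t => onorm2 (f t)) (2 * oinner (f 0) df).
Proof. by move=> /oderiv0E[? [? [? [? [? [? [? ?]]]]]]]; oct_unfold; deriv0_poly. Qed.

Lemma curve_deriv0_near {g h : R -> oct * oct} {d} :
  (\forall t \near 0, g t = h t) -> curve_deriv0 g d -> curve_deriv0 h d.
Proof.
move=> gh /curve_deriv0E[g1d g2d]; apply/curve_deriv0E.
by split; [apply: oderiv0_near g1d | apply: oderiv0_near g2d]; apply: filterS gh => t ->.
Qed.

Lemma curve_deriv0_uniq {g : R -> oct * oct} {a b} :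
  curve_deriv0 g a -> curve_deriv0 g b -> a = b.
Proof.
move=> /curve_deriv0E[a1 a2] /curve_deriv0E[b1 b2].
by rewrite [a]surjective_pairing [b]surjective_pairing (oderiv0_uniq a1 b1) (oderiv0_uniq a2 b2).
Qed.

End CurveDerivative.

Section ChartTransition.
Context {R : realType}.
Local Notation oct := (oct R).
Implicit Types (p q : oct * oct).

(* [1,u,v] = [u',1,v'] l forces l = u, hence u' = u^-1 = conj u / |u|^2 and
   v' = v u^-1. *)
Definition chart_swap p : oct * oct :=
  (oscale (onorm2 p.1)^-1 (oconj p.1), oscale (onorm2 p.1)^-1 (omul p.2 (oconj p.1))).

Definition chart_swap_diff p (t : oct * oct) : oct * oct :=
  let s := (onorm2 p.1)^-1 in
  let z := oadd (oconj t.1) (oscale (- (2 * oinner p.1 t.1 * s)) (oconj p.1)) in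
  (oscale s z, oscale s (oadd (omul t.2 (oconj p.1)) (omul p.2 z))).

Lemma oequiv_chart_swap p q :
  oequiv (oone R) p.1 p.2 q.1 (oone R) q.2 -> onorm2 p.1 != 0 /\ q = chart_swap p.
Proof.
case: p q => u v [u' v'] /= [l [l0 [E1 [E2 E3]]]].
rewrite omul1o in E2; rewrite -{l}E2 in l0 E1 E3.
have N0 : onorm2 u != 0 by apply/eqP => /onorm2_eq0.
split=> //; rewrite /chart_swap /=; congr (_, _).
  by rewrite -(omul1o (oconj u)) E1 omulK_conj oscaleK.
by rewrite E3 omulK_conj oscaleK.
Qed.

Lemma curve_deriv0_chart_swap {g : R -> oct * oct} {d} :
  onorm2 (g 0).1 != 0 -> curve_deriv0 g d ->
  curve_deriv0 (fun t => chart_swap (g t)) (chart_swap_diff (g 0) d).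
Proof.
move=> N0 /curve_deriv0E[U V]; apply/curve_deriv0E; rewrite /chart_swap_diff /=.
have S := deriv0V N0 (deriv0_onorm2 U).
have scale_conj (c N : R) x y : oadd (oscale (- c / N ^+ 2) x) (oscale N^-1 y) =
    oscale N^-1 (oadd y (oscale (- (c * N^-1)) x)).
  oct_case x; oct_case y; oct_unfold; rewrite -!exprVn.
  by congr (Oct (Quat _ _ _ _) (Quat _ _ _ _)); ring.
have scale_mul (c N : R) w x y z :
    oadd (oscale (- c / N ^+ 2) (omul w x)) (oscale N^-1 (oadd y (omul w z))) =
    oscale N^-1 (oadd y (omul w (oadd z (oscale (- (c * N^-1)) x)))).
  oct_case w; oct_case x; oct_case y; oct_case z; oct_unfold; rewrite -!exprVn.
  by congr (Oct (Quat _ _ _ _) (Quat _ _ _ _)); ring.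
split.
  by move: (oderiv0_scale S (oderiv0_conj U)); rewrite /= scale_conj.
by move: (oderiv0_scale S (oderiv0_mul V (oderiv0_conj U))); rewrite /= scale_mul.
Qed.

Lemma ds2_chart_swap p (t : oct * oct) : onorm2 p.1 != 0 -> ds_denom p != 0 ->
  ds2 (chart_swap p) (chart_swap_diff p t) = ds2 p t.
Proof.
case: p t => u v [xi eta]; rewrite /ds_denom /=.
have norm_z c : onorm2 (oadd (oconj xi) (oscale c (oconj u))) =
    onorm2 xi + 2 * c * oinner u xi + c ^+ 2 * onorm2 u.
  by rewrite onorm2D onorm2_scale !onorm2_conj oinner_scaler oinner_conj oinnerC; ring.
have cross (a w z : oct) : ore (omul (oconj a) (omul (oadd w (omul a z)) (oconj z))) =
    oinner w (omul a z) + onorm2 a * onorm2 z.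
  by oct_case a; oct_case w; oct_case z; oct_unfold; ring.
have inner_z (a b x y : oct) c :
    oinner (omul y (oconj a)) (omul b (oadd (oconj x) (oscale c (oconj a)))) =
    2 * oinner a x * oinner y b - ore (omul (omul a (oconj b)) (omul y (oconj x)))
    + c * onorm2 a * oinner y b.
  by oct_case a; oct_case b; oct_case x; oct_case y; oct_unfold; ring.
move=> N0 D0; rewrite /ds2 /chart_swap /chart_swap_diff /=.
rewrite !oconj_scale !omul_scalel !omul_scaler !ore_scale oconj_mul oconjK oconj_mulK.
rewrite !omul_scalel !ore_scale cross !onorm2_scale !norm_z onorm2D.
rewrite !onorm2_mul !onorm2_conj inner_z norm_z.
move: (ore _) (onorm2 u) (onorm2 v) (onorm2 xi) (onorm2 eta) N0 D0 => T N nv nxi neta N0 D0.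
move: (oinner u xi) (oinner eta v) => uxi etav.
by field; rewrite N0 D0.
Qed.

Lemma ds2_chart_change (g1 g2 : R -> oct * oct) d1 d2 :
  (\forall t \near 0,
     chart_dom (g1 t) /\ chart_dom (g2 t) /\
     oequiv (oone R) (g1 t).1 (g1 t).2 (g2 t).1 (oone R) (g2 t).2) ->
  curve_deriv0 g1 d1 -> curve_deriv0 g2 d2 -> ds2 (g1 0) d1 = ds2 (g2 0) d2.
Proof.
move=> near_equiv g1d1 g2d2.
have near_swap : \forall t \near 0, onorm2 (g1 t).1 != 0 /\ g2 t = chart_swap (g1 t).
  by apply: filterS near_equiv => t [_ [_ /oequiv_chart_swap]].
have [N0 g2_0] := nbhs_singleton near_swap.
have g2d : curve_deriv0 g2 (chart_swap_diff (g1 0) d1).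
  apply: curve_deriv0_near (curve_deriv0_chart_swap N0 g1d1).
  by apply: filterS near_swap => t [_ ->].
rewrite (curve_deriv0_uniq g2d2 g2d) g2_0 ds2_chart_swap //.
exact: ds_denom_neq0 (nbhs_singleton near_equiv).1.
Qed.

End ChartTransition.

Theorem proposition7p2 (R : realType) :
  (* on each chart (both charts have the same coordinate domain and formula) *)
  (forall p : oct R * oct R, chart_dom p ->
     (* dsB is a symmetric bilinear form with quadratic form ds2 *)
     (forall x y, dsB p x y = dsB p y x) /\
     (forall (c : R) x y z, dsB p (tadd (tscale c x) y) z = c * dsB p x z + dsB p y z) /\
     (forall x, dsB p x x = ds2 p x) /\
     (* non-degenerate *)
     (forall x, (forall y, dsB p x y = 0) -> x = tzero R) /\
     (* of signature (8,8) *)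
     has_signature 8 8 (gram p)) /\
  (* well defined on OP^(1,1): the two charts induce the same ds^2 on
     their overlap (checked on arbitrary differentiable curves) *)
  (forall (g1 g2 : R -> oct R * oct R) (d1 d2 : oct R * oct R),
     (\forall t \near (0 : R),
        chart_dom (g1 t) /\ chart_dom (g2 t) /\
        (* [1, u1(t), v1(t)] ~ [u2(t), 1, v2(t)] *)
        oequiv (oone R) (g1 t).1 (g1 t).2 (g2 t).1 (oone R) (g2 t).2) ->
     curve_deriv0 g1 d1 -> curve_deriv0 g2 d2 ->
     ds2 (g1 0) d1 = ds2 (g2 0) d2).
Proof.
split=> [p dom_p | g1 g2 d1 d2]; last exact: ds2_chart_change.
split; [|split; [|split; [|split]]].
- by move=> x y; rewrite !dsBE /ds_numer ds_numC.
- by move=> c x y z; rewrite !dsBE /ds_numer ds_num_linear mulrDl mulrA.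
- by move=> x; rewrite dsBE ds2E.
- by move=> x; apply: dsB_nondegenerate.
- exact: gram_signature.
Qed.
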